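(* Let $\mathcal{A}$ be a unital C$^*$-algebra with center $Z(\mathcal{A})$. (1) If $L$ is a complete transfer action for a C$^*$-dynamical system $(\mathcal{A},\Gamma^+,\alpha)$, then $(\alpha,L)$ is a complete interaction and $L_x(1)\in Z(\mathcal{A})$ for all $x\in\Gamma^+$. (2) Conversely, if $(\mathcal{V},\mathcal{H})$ is a complete interaction such that $\mathcal{H}_x(1)\in Z(\mathcal{A})$ for all $x\in\Gamma^+$, then each $\mathcal{V}_x$ is multiplicative, i.e. $(\mathcal{A},\Gamma^+,\mathcal{V})$ is a C$^*$-dynamical system, and $\mathcal{H}$ is a complete transfer action for it.
   Context: $\Gamma$ is a totally ordered abelian group with identity $0$ and $\Gamma^+=\{x\in\Gamma:0\le x\}$. An action of $\Gamma^+$ on $\mathcal{A}$ is a map $x\mapsto\mathcal{V}_x$ from $\Gamma^+$ into the bounded positive linear maps $\mathcal{A}\to\mathcal{A}$ with $\mathcal{V}_0=\mathrm{Id}$ and $\mathcal{V}_x\circ\mathcal{V}_y=\mathcal{V}_{x+y}$; a C$^*$-dynamical system $(\mathcal{A},\Gamma^+,\alpha)$ is such an action in which each $\alpha_x$ is a $*$-endomorphism. A transfer action for $(\mathcal{A},\Gamma^+,\alpha)$ is an action $L$ with $L_x(\alpha_x(a)b)=aL_x(b)$ for all $a,b\in\mathcal{A}$, $x\in\Gamma^+$; it is complete if moreover $\alpha_x(L_x(a))=\alpha_x(1)a\alpha_x(1)$ for all $a\in\mathcal{A}$, $x\in\Gamma^+$. An interaction is a pair $(\mathcal{V},\mathcal{H})$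 of actions such that for every $x\in\Gamma^+$: (i) $\mathcal{V}_x\mathcal{H}_x\mathcal{V}_x=\mathcal{V}_x$; (ii) $\mathcal{H}_x\mathcal{V}_x\mathcal{H}_x=\mathcal{H}_x$; (iii) $\mathcal{V}_x(ab)=\mathcal{V}_x(a)\mathcal{V}_x(b)$ whenever $a$ or $b$ belongs to $\mathcal{H}_x(\mathcal{A})$; (iv) $\mathcal{H}_x(ab)=\mathcal{H}_x(a)\mathcal{H}_x(b)$ whenever $a$ or $b$ belongs to $\mathcal{V}_x(\mathcal{A})$. An interaction is complete if moreover $\mathcal{H}_x(\mathcal{V}_x(a))=\mathcal{H}_x(1)a\mathcal{H}_x(1)$ and $\mathcal{V}_x(\mathcal{H}_x(a))=\mathcal{V}_x(1)a\mathcal{V}_x(1)$ for all $x\in\Gamma^+$, $a\in\mathcal{A}$, and $\mathcal{H}_y(1)\mathcal{V}_x(1)=\mathcal{V}_x(1)\mathcal{H}_y(1)$ for all $x,y\in\Gamma^+$. *)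

From HB Require Import structures.
From mathcomp Require Import all_boot all_order all_algebra.
From mathcomp Require Import complex.
From mathcomp Require Import reals.
Set Implicit Arguments. Unset Strict Implicit. Unset Printing Implicit Defensive.
Import Order.TTheory GRing.Theory Num.Theory ComplexField.
Local Open Scope ring_scope.

Section Cstar.
Variables (R : realType) (A : algType R[i]) (star : A -> A) (nrm : A -> R).

Definition is_involution : Prop :=
  [/\ forall a b, star (a + b) = star a + star b,
      forall (c : R[i]) a, star (c *: a) = c^* *: star a,
      forall a b, star (a * b) = star b * star a
    & forall a, star (star a) = a].

Definition is_norm : Prop :=
  [/\ forall a, 0 <= nrm a,
      forall a, nrm a = 0 -> a = 0,
      forall a b, nrm (a + b) <= nrm a + nrm b
    & forall (c : R[i]) a, ((nrm (c *: a))%:C)%C = `|c| * ((nrm a)%:C)%C].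

Definition is_complete : Prop :=
  forall u : nat -> A,
    (forall e : R, 0 < e -> exists N, forall m n, (N <= m)%N -> (N <= n)%N ->
        nrm (u m - u n) < e) ->
    exists l : A, forall e : R, 0 < e -> exists N, forall n, (N <= n)%N ->
        nrm (u n - l) < e.

Definition unital_Cstar_algebra : Prop :=
  [/\ is_involution, is_norm,
      forall a b, nrm (a * b) <= nrm a * nrm b,
      forall a, nrm (star a * a) = nrm a ^+ 2
    & is_complete].

Definition positive (a : A) : Prop := exists b, a = star b * b.

Definition in_center (z : A) : Prop := forall a, z * a = a * z.

Definition complex_linear (T : A -> A) : Prop :=
  forall (c : R[i]) a b, T (c *: a + b) = c *: T a + T b.

Definition bounded (T : A -> A) : Prop :=
  exists K : R, forall a, nrm (T a) <= K * nrm a.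

Definition positive_map (T : A -> A) : Prop :=
  forall a, positive a -> positive (T a).

Definition bpl_map (T : A -> A) : Prop :=
  [/\ complex_linear T, bounded T & positive_map T].

Definition star_endomorphism (T : A -> A) : Prop :=
  [/\ complex_linear T,
      forall a b, T (a * b) = T a * T b
    & forall a, T (star a) = star (T a)].

Variables (G : zmodType) (le : G -> G -> Prop).

Definition totally_ordered_group : Prop :=
  [/\ forall x, le x x,
      forall x y z, le x y -> le y z -> le x z,
      forall x y, le x y -> le y x -> x = y,
      forall x y, le x y \/ le y x
    & forall x y z, le x y -> le (x + z) (y + z)].

(* An action of Gamma^+ on A: x |-> V x, for x in Gamma^+ (values of V
   outside Gamma^+ are irrelevant). *)
Definition action (V : G -> A -> A) : Prop :=
  [/\ forall x, le 0 x -> bpl_map (V x),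
      forall a, V 0 a = a
    & forall x y, le 0 x -> le 0 y -> forall a, V x (V y a) = V (x + y) a].

Definition Cstar_dynamical_system (alpha : G -> A -> A) : Prop :=
  action alpha /\ forall x, le 0 x -> star_endomorphism (alpha x).

Definition transfer_action (alpha L : G -> A -> A) : Prop :=
  action L /\
  forall x, le 0 x -> forall a b, L x (alpha x a * b) = a * L x b.

Definition complete_transfer_action (alpha L : G -> A -> A) : Prop :=
  transfer_action alpha L /\
  forall x, le 0 x -> forall a, alpha x (L x a) = alpha x 1 * a * alpha x 1.

Definition interaction (V H : G -> A -> A) : Prop :=
  [/\ action V, action H &
      forall x, le 0 x ->
      [/\ forall a, V x (H x (V x a)) = V x a,
          forall a, H x (V x (H x a)) = H x a,
          forall a b, (exists c, a = H x c) \/ (exists c, b = H x c) ->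
              V x (a * b) = V x a * V x b
        & forall a b, (exists c, a = V x c) \/ (exists c, b = V x c) ->
              H x (a * b) = H x a * H x b]].

Definition complete_interaction (V H : G -> A -> A) : Prop :=
  [/\ interaction V H,
      forall x, le 0 x -> forall a,
        H x (V x a) = H x 1 * a * H x 1 /\ V x (H x a) = V x 1 * a * V x 1
    & forall x y, le 0 x -> le 0 y -> H y 1 * V x 1 = V x 1 * H y 1].

End Cstar.

(* Everything follows from two algebraic facts. Positive linear maps on a
   unital *-algebra commute with the involution, so a transfer operator L of a
   *-endomorphism alpha is a bimodule map, L (alpha a * b * alpha c) =
   a * L b * c; then L 1 is central, and completeness makes L 1 act as an
   idempotent on the range of L, which yields the interaction identities.
   Conversely, for a complete interaction with H 1 central, e := H 1 * H 1 is a
   central idempotent with H (V a) = e * a and V (e * a) = V a, so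
   V (a * b) = V (e * a * (e * b)) = V (H (V a) * e * b) = V a * V b, and
   H (V a * b) = e * a * H b = a * H b. *)
From mathcomp Require Import all_boot all_order all_algebra.
From mathcomp Require Import complex reals.
Import Order.TTheory GRing.Theory Num.Theory ComplexField.
Set Implicit Arguments. Unset Strict Implicit. Unset Printing Implicit Defensive.
Local Open Scope ring_scope.

Lemma conjc_i (R : realType) : ('i%C : R[i])^*%C = - 'i%C.
Proof. by apply/eqP; rewrite eq_complex /= oppr0 !eqxx. Qed.

Lemma conjc_1 (R : realType) : (1 : R[i])^*%C = 1.
Proof. by apply/eqP; rewrite eq_complex /= oppr0 !eqxx. Qed.

Lemma i_sub_conjc_neq0 (R : realType) : ('i%C : R[i]) - ('i%C)^*%C != 0.
Proof.
rewrite conjc_i opprK; apply/negP; rewrite eq_complex /= => /andP[_].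
by rewrite (_ : 1 + 1 = 2%:R) // pnatr_eq0.
Qed.

Lemma in_centerM (R : realType) (A : algType R[i]) (z w : A) :
  in_center z -> in_center w -> in_center (z * w).
Proof. by move=> cz cw a; rewrite -mulrA cw mulrA cz mulrA. Qed.

Section Involution.
Variables (R : realType) (A : algType R[i]) (star : A -> A).
Hypothesis star_inv : is_involution star.

Lemma starD a b : star (a + b) = star a + star b. Proof. by case: star_inv. Qed.
Lemma starZ c a : star (c *: a) = c^*%C *: star a. Proof. by case: star_inv. Qed.
Lemma starM a b : star (a * b) = star b * star a. Proof. by case: star_inv. Qed.
Lemma starK a : star (star a) = a. Proof. by case: star_inv. Qed.

Lemma star1 : star 1 = 1.
Proof.
have h : star (star 1) = star (star 1) * star 1 by rewrite -starM mul1r.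
by rewrite starK mul1r in h.
Qed.

Lemma star_inj : injective star.
Proof. by move=> a b h; rewrite -(starK a) h starK. Qed.

Section ComplexLinear.
Variable T : A -> A.
Hypothesis T_linear : complex_linear T.

Lemma linearD a b : T (a + b) = T a + T b.
Proof. by have := T_linear 1 a b; rewrite !scale1r. Qed.

Lemma linear0 : T 0 = 0.
Proof. by apply: (addrI (T 0)); rewrite -linearD !addr0. Qed.

Lemma linearZ c a : T (c *: a) = c *: T a.
Proof. by rewrite -[c *: a]addr0 T_linear linear0 addr0. Qed.

(* With D a := T (star a) - star (T a), which is additive, conjugate-linear
   and vanishes on positive elements and on 1, expanding
   D (star (a + c 1) * (a + c 1)) = 0 gives c^* D (star a) + c D a = 0;
   the cases c = 1 and c = 'i force D a = 0. *)
Lemma positive_linear_star :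
  positive_map star T -> forall a, T (star a) = star (T a).
Proof.
move=> T_pos a.
pose D x := T (star x) - star (T x).
have DD x y : D (x + y) = D x + D y.
  by rewrite /D starD !linearD starD opprD addrACA.
have DZ c x : D (c *: x) = c^*%C *: D x.
  by rewrite /D starZ !linearZ starZ scalerBr.
have D_pos b : D (star b * b) = 0.
  have [b' Tb] := T_pos (star b * b) (ex_intro _ b erefl).
  by rewrite /D starM starK Tb starM starK subrr.
have D1 : D 1 = 0 by have := D_pos 1; rewrite star1 mulr1.
have polar c : c^*%C *: D (star a) + c *: D a = 0.
  have := D_pos (a + c *: 1).
  rewrite starD starZ star1 mulrDl !mulrDr -!scalerAl -!scalerAr !mul1r !mulr1.
  by rewrite !DD !DZ D_pos D1 !scaler0 add0r addr0 conjcK.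
have Dstar : D (star a) = - D a.
  by apply/eqP; rewrite -addr_eq0; have := polar 1; rewrite conjc_1 !scale1r => ->.
have := polar 'i%C; rewrite Dstar scalerN -scaleNr -scalerDl addrC => Di.
have : D a = 0 by rewrite -[D a](scalerK (i_sub_conjc_neq0 R)) Di scaler0.
by move/eqP; rewrite subr_eq0 => /eqP.
Qed.

End ComplexLinear.

Lemma bpl_map_star (nrm : A -> R) T :
  bpl_map star nrm T -> forall a, T (star a) = star (T a).
Proof. by case=> T_linear _ T_pos; apply: positive_linear_star. Qed.

Section TransferOperator.
Variables alpha L : A -> A.
Hypotheses (alphaM : forall a b, alpha (a * b) = alpha a * alpha b)
  (alpha_star : forall a, alpha (star a) = star (alpha a))
  (L_star : forall a, L (star a) = star (L a))
  (L_transfer : forall a b, L (alpha a * b) = a * L b)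
  (L_complete : forall a, alpha (L a) = alpha 1 * a * alpha 1).

Lemma transfer_mulr b c : L (b * alpha c) = L b * c.
Proof.
apply: star_inj.
by rewrite -L_star !starM -alpha_star L_transfer L_star.
Qed.

Lemma transfer1_alpha c : L (alpha c) = c * L 1.
Proof. by rewrite -[alpha c]mulr1 L_transfer. Qed.

Lemma transfer1_central : in_center (L 1).
Proof. by move=> a; rewrite -transfer1_alpha -[alpha a]mul1r transfer_mulr. Qed.

Lemma transfer1_mull b : L 1 * L b = L b.
Proof. by rewrite -L_transfer L_complete mulr1 -alphaM mulr1 L_transfer mul1r. Qed.

Lemma alpha_transfer_alpha a : alpha (L (alpha a)) = alpha a.
Proof. by rewrite L_complete -!alphaM mul1r mulr1. Qed.

Lemma transfer_alpha_transfer a : L (alpha (L a)) = L a.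
Proof. by rewrite L_complete -mulrA L_transfer transfer_mulr mulr1 mul1r. Qed.

Lemma transfer_alpha c : L (alpha c) = L 1 * c * L 1.
Proof. by rewrite transfer1_alpha transfer1_central -mulrA transfer1_mull. Qed.

Lemma transfer_mul_on_alpha a b :
  (exists c, a = alpha c) \/ (exists c, b = alpha c) -> L (a * b) = L a * L b.
Proof.
case=> [[c ->]|[c ->]]; first by rewrite L_transfer transfer1_alpha -mulrA transfer1_mull.
rewrite transfer_mulr transfer1_alpha -transfer1_central mulrA.
by rewrite -transfer1_central transfer1_mull.
Qed.

Lemma transfer_interaction_axioms :
  [/\ forall a, alpha (L (alpha a)) = alpha a,
       forall a, L (alpha (L a)) = L a,
       forall a b, (exists c, a = L c) \/ (exists c, b = L c) ->
         alpha (a * b) = alpha a * alpha b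
     & forall a b, (exists c, a = alpha c) \/ (exists c, b = alpha c) ->
         L (a * b) = L a * L b].
Proof.
split=> [a|a|a b _|a b]; first exact: alpha_transfer_alpha.
- exact: transfer_alpha_transfer.
- exact: alphaM.
- exact: transfer_mul_on_alpha.
Qed.

End TransferOperator.

End Involution.

Section CentralInteraction.
Variables (R : realType) (A : algType R[i]) (V H : A -> A).
Hypotheses (VHV : forall a, V (H (V a)) = V a)
  (HVH : forall a, H (V (H a)) = H a)
  (V_mul_on_H : forall a b, (exists c, a = H c) -> V (a * b) = V a * V b)
  (H_mul_on_V : forall a b, (exists c, a = V c) -> H (a * b) = H a * H b)
  (H_complete : forall a, H (V a) = H 1 * a * H 1)
  (H1_central : in_center (H 1)).

Let e := H 1 * H 1.

Let e_central : in_center e. Proof. exact: in_centerM. Qed.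

Lemma HV_mul_idem a : H (V a) = e * a.
Proof. by rewrite H_complete -mulrA -H1_central mulrA. Qed.

Lemma idem_mulH b : e * H b = H b.
Proof. by rewrite -HV_mul_idem HVH. Qed.

Lemma V_mul_idem a : V (e * a) = V a.
Proof. by rewrite -HV_mul_idem VHV. Qed.

Lemma idem_idem : e * e = e.
Proof. by rewrite [in LHS]/e mulrA idem_mulH. Qed.

Lemma interaction_multiplicative a b : V (a * b) = V a * V b.
Proof.
rewrite -(V_mul_idem a) -(V_mul_idem b) -V_mul_on_H; last first.
  by exists (V a); rewrite HV_mul_idem.
by rewrite mulrA -(mulrA e a e) -(e_central a) mulrA idem_idem -mulrA V_mul_idem.
Qed.

Lemma interaction_transfer a b : H (V a * b) = a * H b.
Proof.
rewrite H_mul_on_V; last by exists a.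
by rewrite HV_mul_idem e_central -mulrA idem_mulH.
Qed.

End CentralInteraction.

Section Actions.
Variables (R : realType) (A : algType R[i]) (star : A -> A) (nrm : A -> R).
Variables (G : zmodType) (le : G -> G -> Prop).
Hypothesis star_inv : is_involution star.

Lemma complete_transfer_interaction alpha L :
  Cstar_dynamical_system star nrm le alpha ->
  complete_transfer_action star nrm le alpha L ->
  complete_interaction star nrm le alpha L /\
  (forall x, le 0 x -> in_center (L x 1)).
Proof.
move=> [alpha_act alpha_end] [[L_act L_transfer] L_complete].
have L_star x : le 0 x -> forall a, L x (star a) = star (L x a).
  by move=> x_ge0; case: L_act => /(_ x x_ge0) L_bpl _ _; apply: bpl_map_star L_bpl.
have L1_central x : le 0 x -> in_center (L x 1).
  move=> x_ge0; have [_ _ alpha_star] := alpha_end x x_ge0.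
  by apply: transfer1_central alpha_star (L_star x x_ge0) (L_transfer x x_ge0).
split=> //; split=> [| |x y x_ge0 y_ge0]; [split=> //| |by rewrite L1_central].
all: move=> x x_ge0; have [_ alphaM alpha_star] := alpha_end x x_ge0.
all: have Ls := L_star x x_ge0; have Lt := L_transfer x x_ge0.
all: have Lc := L_complete x x_ge0.
- exact: (transfer_interaction_axioms star_inv alphaM alpha_star Ls Lt Lc).
- by move=> a; split; [exact: (transfer_alpha star_inv alphaM alpha_star Ls Lt Lc)|].
Qed.

Lemma central_interaction_transfer V H :
  complete_interaction star nrm le V H ->
  (forall x, le 0 x -> in_center (H x 1)) ->
  Cstar_dynamical_system star nrm le V /\
  complete_transfer_action star nrm le V H.
Proof.
move=> [[V_act H_act V_H] V_H_complete _] H1_central.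
have V_H_at x : le 0 x ->
    (forall a b, V x (a * b) = V x a * V x b) /\
    (forall a b, H x (V x a * b) = a * H x b).
  move=> x_ge0; have [VHV HVH V_mul H_mul] := V_H x x_ge0.
  have H_complete a : H x (V x a) = H x 1 * a * H x 1.
    by have [] := V_H_complete x x_ge0 a.
  have Hc := H1_central x x_ge0.
  split; first exact: (interaction_multiplicative VHV HVH
    (fun a b ha => V_mul a b (or_introl ha)) H_complete Hc).
  exact: (interaction_transfer HVH (fun a b ha => H_mul a b (or_introl ha))
    H_complete Hc).
split; split=> //.
- move=> x x_ge0; case: V_act => /(_ x x_ge0) V_bpl _ _.
  split; [by case: V_bpl | exact: (V_H_at x x_ge0).1 | exact: bpl_map_star V_bpl].
- by split=> // x x_ge0; exact: (V_H_at x x_ge0).2.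
- by move=> x x_ge0 a; have [] := V_H_complete x x_ge0 a.
Qed.

End Actions.

Theorem proposition3p4 (R : realType) (A : algType R[i]) (star : A -> A)
    (nrm : A -> R) (G : zmodType) (le : G -> G -> Prop) :
  unital_Cstar_algebra star nrm ->
  totally_ordered_group le ->
  (forall alpha L : G -> A -> A,
     Cstar_dynamical_system star nrm le alpha ->
     complete_transfer_action star nrm le alpha L ->
     complete_interaction star nrm le alpha L /\
     (forall x, le 0 x -> in_center (L x 1))) /\
  (forall V H : G -> A -> A,
     complete_interaction star nrm le V H ->
     (forall x, le 0 x -> in_center (H x 1)) ->
     Cstar_dynamical_system star nrm le V /\
     complete_transfer_action star nrm le V H).
Proof.
case=> star_inv _ _ _ _ _; split.
- exact: complete_transfer_interaction.
- exact: central_interaction_transfer.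
Qed.
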